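(* Let $N$ be a positive integer and $\epsilon_s>0$, and let $\mathcal A=\{x_1,\dots,x_N\}$ be $N$ real data points in a bounded interval $[x_L,x_U]$. Let $N_c^{med}$ be the size of the smaller of the two blocks $\mathcal A\cap[x_L,r)$, $\mathcal A\cap[r,x_U]$ when the split point $r$ is drawn from the density on $[x_L,x_U]$ proportional to $\exp\{\epsilon_s q(r)/2\}$ with $q(r)=-\big|\,|\mathcal A\cap[x_L,r)|-|\mathcal A\cap[r,x_U]|\,\big|$ (the differentially private median split), and let $N_c^{rand}$ be the corresponding size when the split point $r$ is drawn uniformly at random from $[x_L,x_U]$. Then for any $0<t<N/2$, $$\Pr(N_c^{med}\le t)\le\Pr(N_c^{rand}\le t).$$
   Context: The density proportional to $\exp\{\epsilon_s q(r)/2\}$ is taken with respect to Lebesgue measure on $[x_L,x_U]$; this is the exponential mechanism giving an $\epsilon_s$-differentially private median split. *)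

From HB Require Import structures.
From mathcomp Require Import all_boot all_order all_algebra.
From mathcomp Require Import all_classical all_reals all_analysis.
Set Implicit Arguments. Unset Strict Implicit. Unset Printing Implicit Defensive.
Import Order.TTheory GRing.Theory Num.Theory.
Local Open Scope classical_set_scope.
Local Open Scope ring_scope.

Section DPMedian.
Variables (R : realType) (N : nat) (x : 'I_N -> R) (xL xU : R).

Definition cnt_left (r : R) : nat :=
  count (fun i => (xL <= x i) && (x i < r)) (enum 'I_N).

Definition cnt_right (r : R) : nat :=
  count (fun i => (r <= x i) && (x i <= xU)) (enum 'I_N).

Definition qscore (r : R) : R :=
  - `| (cnt_left r)%:R - (cnt_right r)%:R |.

Definition Nc (r : R) : nat := minn (cnt_left r) (cnt_right r).

Definition med_weight (eps : R) (r : R) : R := expR (eps * qscore r / 2).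

Definition small_event (t : R) : set R := [set r | (Nc r)%:R <= t].

Definition prob_med (eps t : R) : R :=
  fine (\int[lebesgue_measure]_(r in [set` `[xL, xU]] `&` small_event t)
          (med_weight eps r)%:E)
  / fine (\int[lebesgue_measure]_(r in [set` `[xL, xU]]) (med_weight eps r)%:E).

Definition prob_rand (t : R) : R :=
  fine (lebesgue_measure ([set` `[xL, xU]] `&` small_event t)) / (xU - xL).

End DPMedian.

From HB Require Import structures.
From mathcomp Require Import all_boot all_order all_algebra.
From mathcomp Require Import all_classical all_reals all_analysis.
From mathcomp Require Import lra measurable_realfun.
Set Implicit Arguments. Unset Strict Implicit. Unset Printing Implicit Defensive.
Import Order.TTheory GRing.Theory Num.Theory.
Local Open Scope classical_set_scope.
Local Open Scope ring_scope.

(* Because the data lie in [xL, xU], q(r) = 2 N_c(r) - N, so the weight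
   w(r) = exp(eps q(r) / 2) of the exponential mechanism is an increasing
   function of N_c(r): with W = exp(eps (2t - N) / 2) we have w <= W on the
   event {N_c <= t} and w > W off it.  Any nonnegative weight with such a
   threshold gives the event at most its uniform probability: if a, b are the
   weighted and p, q the Lebesgue masses of the event and of its complement,
   then a <= W p and W q <= b give a q <= p b, i.e. a/(a+b) <= p/(p+q). *)

Lemma ratio_le_of_threshold (R : realFieldType) (a b p q W : R) :
  0 <= a -> 0 <= b -> 0 <= p -> 0 <= q -> a <= W * p -> W * q <= b ->
  a / (a + b) <= p / (p + q).
Proof.
move=> a0 b0 p0 q0 aWp Wqb.
have aq_le_pb : a * q <= p * b.
  apply: (le_trans (ler_wpM2r q0 aWp)).
  by rewrite mulrAC mulrC ler_wpM2l.
have [->|ab0] := eqVneq (a + b) 0.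
  by rewrite invr0 mulr0 divr_ge0 // addr_ge0.
have [/eqP pq0|pq0] := eqVneq (p + q) 0.
  have [p_eq0 q_eq0] : p = 0 /\ q = 0 by split; lra.
  have a_eq0 : a = 0 by rewrite p_eq0 mulr0 in aWp; lra.
  by rewrite a_eq0 p_eq0 !mul0r.
rewrite ler_pdivrMr ?lt0r ?ab0 ?addr_ge0 // mulrAC ler_pdivlMr ?lt0r ?pq0 ?addr_ge0 //.
lra.
Qed.

Section threshold_ratio.
Context d (T : measurableType d) (R : realType) (mu : {measure set T -> \bar R}).
Variables (I A : set T) (w : T -> R) (W : R).
Hypotheses (mI : measurable I) (mA : measurable A) (muI_fin : (mu I < +oo)%E).
Hypotheses (w_int : mu.-integrable I (EFin \o w)) (w_ge0 : forall r, I r -> 0 <= w r).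
Hypotheses (w_le : forall r, (I `&` A) r -> w r <= W)
           (w_ge : forall r, (I `\` A) r -> W <= w r).

Let mIA : measurable (I `&` A). Proof. exact: measurableI. Qed.
Let mIdA : measurable (I `\` A). Proof. exact: measurableD. Qed.

Let measure_fin D : measurable D -> D `<=` I -> (mu D < +oo)%E.
Proof. by move=> mD DI; rewrite (le_lt_trans _ muI_fin) // le_measure ?inE. Qed.

Let integrable_cst D : measurable D -> D `<=` I -> mu.-integrable D (EFin \o cst W).
Proof.
move=> mD DI; apply: measurable_bounded_integrable => //; last exact: bounded_cst.
exact: measure_fin.
Qed.

Let integrable_w D : measurable D -> D `<=` I -> mu.-integrable D (EFin \o w).
Proof. by move=> mD DI; apply: integrableS w_int. Qed.

Lemma Rintegral_ratio_le_measure_ratio :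
  (\int[mu]_(r in I `&` A) w r) / (\int[mu]_(r in I) w r)
    <= fine (mu (I `&` A)) / fine (mu I).
Proof.
have I_split : I = (I `&` A) `|` (I `\` A) by rewrite setUIDK.
have disjA : [disjoint I `&` A & I `\` A] by apply/disj_setPS => r [[_ ?] [_ ?]].
have -> : \int[mu]_(r in I) w r
    = \int[mu]_(r in I `&` A) w r + \int[mu]_(r in I `\` A) w r.
  by rewrite {1}I_split Rintegral_setU // -I_split.
have muI : mu I = (mu (I `&` A) + mu (I `\` A))%E.
  by rewrite {1}I_split measureU //; apply/eqP.
have fin_IA : mu (I `&` A) \is a fin_num.
  by rewrite ge0_fin_numE ?measure_ge0 // measure_fin.
have fin_IdA : mu (I `\` A) \is a fin_num.
  by rewrite ge0_fin_numE ?measure_ge0 // measure_fin.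
rewrite muI fineD //.
apply: (@ratio_le_of_threshold _ _ _ _ _ W).
- by apply: Rintegral_ge0 => r [/w_ge0].
- by apply: Rintegral_ge0 => r [/w_ge0].
- exact/fine_ge0/measure_ge0.
- exact/fine_ge0/measure_ge0.
- rewrite -Rintegral_cst //; apply: le_Rintegral => //.
  + exact: integrable_w.
  + exact: integrable_cst.
- rewrite -Rintegral_cst //; apply: le_Rintegral => //.
  + exact: integrable_cst.
  + exact: integrable_w.
Qed.

End threshold_ratio.

Section median_split.
Variables (R : realType) (N : nat) (x : 'I_N -> R) (xL xU : R).

Lemma qscore_le0 r : qscore x xL xU r <= 0.
Proof. by rewrite oppr_le0. Qed.

Lemma measurable_qscore : measurable_fun setT (qscore x xL xU).
Proof.
have mleft : measurable_fun setT (fun r => (cnt_left x xL r)%:R : R).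
  apply: nondecreasing_measurable => // r s rs.
  rewrite ler_nat; apply: sub_count => i /= /andP[-> xir] /=.
  exact: lt_le_trans xir rs.
have mright : measurable_fun setT (fun r => (cnt_right x xU r)%:R : R).
  apply: nonincreasing_measurable => // r s rs.
  rewrite ler_nat; apply: sub_count => i /= /andP[sxi ->].
  by rewrite andbT (le_trans rs sxi).
apply: measurable_funN.
exact: measurableT_comp (measurable_funB mleft mright).
Qed.

Lemma measurable_med_weight eps : measurable_fun setT (med_weight x xL xU eps).
Proof.
apply: measurableT_comp => //; apply: measurable_funM => //.
exact: measurable_funM measurable_qscore.
Qed.

Lemma med_weight_le1 eps r : 0 <= eps -> med_weight x xL xU eps r <= 1.
Proof. by move=> eps_ge0; rewrite expR_le1; have := qscore_le0 r; nra. Qed.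

Lemma integrable_med_weight eps : 0 <= eps ->
  (@lebesgue_measure R).-integrable [set` `[xL, xU]] (EFin \o med_weight x xL xU eps).
Proof.
move=> eps_ge0; apply: measurable_bounded_integrable.
- exact: measurable_itv.
- exact/compact_finite_measure/segment_compact.
- exact: measurable_funS (measurable_med_weight eps).
- exists 1; split => // M M_gt1 r _ /=.
  rewrite ger0_norm ?expR_ge0 //.
  exact: le_trans (med_weight_le1 r eps_ge0) (ltW M_gt1).
Qed.

Hypothesis x_in : forall i, xL <= x i <= xU.

Lemma cnt_leftD_right r : (cnt_left x xL r + cnt_right x xU r)%N = N.
Proof.
rewrite -[RHS](size_enum_ord N) -(count_predC (fun i => (xL <= x i) && (x i < r))).
congr (_ + _)%N; apply: eq_count => i /=.
by case/andP: (x_in i) => -> ->; rewrite andbT -leNgt.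
Qed.

Lemma qscoreE r : qscore x xL xU r = 2 * (Nc x xL xU r)%:R - N%:R.
Proof.
have -> : N%:R = (cnt_left x xL r)%:R + (cnt_right x xU r)%:R :> R.
  by rewrite -natrD cnt_leftD_right.
rewrite /qscore /Nc; set a := cnt_left x xL r; set b := cnt_right x xU r.
have [ab|ba] := leqP a b.
  by rewrite ler0_norm ?subr_le0 ?ler_nat //; lra.
rewrite ger0_norm ?subr_ge0 ?ler_nat ?(ltnW ba) //; lra.
Qed.

Lemma qscore_leE t r :
  (qscore x xL xU r <= 2 * t - N%:R) = ((Nc x xL xU r)%:R <= t).
Proof. by rewrite qscoreE lerD2r ler_pM2l. Qed.

Lemma med_weight_leE eps t r : 0 < eps ->
  (med_weight x xL xU eps r <= expR (eps * (2 * t - N%:R) / 2))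
    = ((Nc x xL xU r)%:R <= t).
Proof.
by move=> eps_gt0; rewrite ler_expR ler_pM2r ?invr_gt0 // ler_pM2l // qscore_leE.
Qed.

Lemma measurable_small_event t : measurable (small_event x xL xU t).
Proof.
have -> : small_event x xL xU t = qscore x xL xU @^-1` `]-oo, 2 * t - N%:R].
  by apply/seteqP; split => r; rewrite /small_event /= in_itv /= qscore_leE.
by rewrite -[_ @^-1` _]setTI; exact: measurable_qscore.
Qed.

End median_split.

Theorem mainTheorem4 (R : realType) (N : nat) (x : 'I_N -> R) (xL xU eps t : R) :
  (0 < N)%N -> 0 < eps -> xL < xU ->
  (forall i, xL <= x i <= xU) ->
  0 < t < N%:R / 2 ->
  prob_med x xL xU eps t <= prob_rand x xL xU t.
Proof.
move=> _ eps_gt0 xLU x_in _.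
have I_len : fine (lebesgue_measure [set` `[xL, xU]]) = xU - xL.
  by rewrite lebesgue_measure_itv /= lte_fin xLU.
rewrite /prob_rand -I_len.
apply: (Rintegral_ratio_le_measure_ratio (W := expR (eps * (2 * t - N%:R) / 2))).
- exact: measurable_itv.
- exact: measurable_small_event.
- exact/compact_finite_measure/segment_compact.
- exact/integrable_med_weight/ltW.
- by move=> r _; exact: expR_ge0.
- by move=> r [_ small_r]; rewrite med_weight_leE.
- move=> r [_ /negP]; rewrite -(med_weight_leE x_in _ _ eps_gt0) -ltNge.
  exact: ltW.
Qed.
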